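(* Let $G$ be a chordal graph and $X\subseteq V(G)$ a clique, and let $L_1,\dots,L_t$ be the evaporation sequence of $G$ with exception set $X$. If $G\setminus X$ is connected, then $L_t$ is a clique (where $L_t=\emptyset$ if $t=0$).
   Context: A vertex is simplicial if its neighborhood is a clique. For a chordal graph $G$ and a clique $X\subseteq V(G)$ (possibly empty), the evaporation sequence of $G$ with exception set $X$ is defined recursively: if $X=V(G)$ it is the empty sequence; otherwise let $L_1$ be the set of simplicial vertices of $G$ that are not in $X$ (this set is always nonempty), and the evaporation sequence is $L_1$ followed by the evaporation sequence of $G-L_1$ with exception set $X$. If the sequence is $L_1,\dots,L_t$ we say $G$ evaporates at time $t$ with exception set $X$. *)

(* A finite simple graph is a symmetric irreflexive relation
   [e : rel T] on a finType T (vertex set = all of T); induced subgraphs are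
   given by a vertex set [V : {set T}]. *)
From mathcomp Require Import all_boot.
Set Implicit Arguments. Unset Strict Implicit. Unset Printing Implicit Defensive.

Section Graphs.
Variable T : finType.
Variable e : rel T.

Definition is_clique (K : {set T}) : Prop :=
  {in K &, forall u v, u != v -> e u v}.

Definition nbhd (V : {set T}) (v : T) : {set T} := [set u in V | e v u].

Definition simplicialb (V : {set T}) (v : T) : bool :=
  (v \in V) && [forall u in nbhd V v, forall w in nbhd V v, (u != w) ==> e u w].

Definition simplicials (V : {set T}) : {set T} := [set v | simplicialb V v].

Definition chordal (V : {set T}) : Prop :=
  forall s : seq T, uniq s -> 4 <= size s -> all (mem V) s -> cycle e s ->
    exists u v : T,
      [/\ u \in s, v \in s, u != v, (next s u != v) && (next s v != u)
        & e u v].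

(* Evaporation sequence of G[V] with exception set X (computed with fuel;
   for a chordal graph and a clique X, each step removes at least one vertex,
   so fuel #|V| suffices and the cut-off never triggers). *)
Fixpoint evap_aux (X : {set T}) (n : nat) (V : {set T}) : seq {set T} :=
  match n with
  | 0 => [::]
  | n'.+1 =>
      if V \subset X then [::]
      else let L := simplicials V :\: X in L :: evap_aux X n' (V :\: L)
  end.

Definition evaporation_sequence (V X : {set T}) : seq {set T} :=
  evap_aux X #|V| V.

Definition connected_in (W : {set T}) : Prop :=
  {in W &, forall u v,
     connect [rel x y | [&& e x y, x \in W & y \in W]] u v}.

End Graphs.

(* The proof rests on one observation about
   simplicial vertices: if x is simplicial in G[V] and u - x - y is a path in
   G[V], then u = y or uy is an edge.  Hence any path of a subgraph G[W] of
   G[V] whose endpoints avoid a set L of simplicial vertices of G[V] can be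
   shortcut around L (induced_shortcut).  Two consequences follow:
   - removing simplicial vertices from a connected G[W] keeps it connected
     (connected_in_setD), so G[V \ X] stays connected along the evaporation;
   - a connected set of simplicial vertices of G[V] is a clique
     (simplicial_connected_clique).
   The last layer L_t is the whole remaining set V \ X, all of whose
   vertices are simplicial, so it is a clique (last_evap_clique). *)

From mathcomp Require Import all_boot.
From mathcomp Require Import zify.
Set Implicit Arguments. Unset Strict Implicit. Unset Printing Implicit Defensive.

Lemma clique0 (T : finType) (e : rel T) : is_clique e set0.
Proof. by move=> u v; rewrite inE. Qed.

Lemma simplicials_sub (T : finType) (e : rel T) (V : {set T}) :
  simplicials e V \subset V.
Proof. by apply/subsetP => x; rewrite inE => /andP []. Qed.

Section Shortcuts.
Variable T : finType.
Variable e : rel T.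
Hypothesis esym : symmetric e.

Definition induced (W : {set T}) : rel T :=
  [rel x y | [&& e x y, x \in W & y \in W]].

Lemma simplicial_adj (V : {set T}) x u w :
  x \in simplicials e V -> u \in V -> w \in V ->
  e x u -> e x w -> u != w -> e u w.
Proof.
rewrite inE => /andP [_ /forallP simpl_x] uV wV xu xw uw.
move: (simpl_x u); rewrite !inE uV xu /= => /forallP /(_ w).
by rewrite !inE wV xw uw.
Qed.

(* A path of G[W] whose endpoints avoid a set L of simplicial vertices of
   G[V] can be shortcut around L: if u - x - y with x in L, then u = y or
   u and y are adjacent. *)
Lemma induced_shortcut (V W L : {set T}) :
  W \subset V -> L \subset simplicials e V ->
  forall p u, u \in W :\: L -> path (induced W) u p -> last u p \notin L ->
  connect (induced (W :\: L)) u (last u p).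
Proof.
move=> sWV sLS p; elim: {p}(size p).+1 {-2}p (ltnSn (size p)) => // n IH.
case=> [|x1 p] /= ltpn u uWL; first by rewrite connect0.
case/andP=> /and3P [ux1 uW x1W] pth lastL.
have [x1L | x1NL] := boolP (x1 \in L); last first.
  have x1WL : x1 \in W :\: L by rewrite !inE x1NL.
  apply: (connect_trans (connect1 _)) (IH _ _ _ x1WL pth lastL) => //.
  by rewrite /induced /= x1WL ux1 uWL.
case: p ltpn pth lastL => [|x2 p] /= ltpn; first by rewrite x1L.
case/andP=> /and3P [x1x2 _ x2W] pth lastL.
have [eq_ux2 | ux2] := eqVneq u x2.
  by subst u; apply: IH => //; lia.
have ux2E : e u x2.
  by apply: (simplicial_adj (subsetP sLS _ x1L)); rewrite ?(subsetP sWV) // esym.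
apply: (IH (x2 :: p)) => //=.
by rewrite pth andbT /induced /= ux2E uW x2W.
Qed.

Lemma connected_in_setD (V W L : {set T}) :
  W \subset V -> L \subset simplicials e V ->
  connected_in e W -> connected_in e (W :\: L).
Proof.
move=> sWV sLS connW u v uWL vWL.
have [uW _] := setDP uWL; have [vW vNL] := setDP vWL.
have /connectP [p pth vE] := connW u v uW vW.
by rewrite vE; apply: (induced_shortcut sWV sLS); rewrite // -vE.
Qed.

Lemma pair_connect_edge u v : u != v -> connect (induced [set u; v]) u v -> e u v.
Proof.
move=> uv; apply: contraTT => Nuv.
have cl : closed (induced [set u; v]) (pred1 u).
  move=> x y /and3P [exy /set2P xuv /set2P yuv].
  case: xuv yuv exy => -> [] -> //.
  - by rewrite (negbTE Nuv).
  - by rewrite esym (negbTE Nuv).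
by apply/negP => /(closed_connect cl); rewrite !inE eqxx eq_sym (negbTE uv).
Qed.

(* Every vertex of a connected set W of simplicial vertices of G[V] has all
   other vertices of W as neighbours: apply the shortcut lemma with
   L = W \ {u, v} to obtain the edge uv. *)
Lemma simplicial_connected_clique (V W : {set T}) :
  W \subset V -> W \subset simplicials e V -> connected_in e W -> is_clique e W.
Proof.
move=> sWV sWS connW u v uW vW uv.
set L := W :\: [set u; v].
have sLS : L \subset simplicials e V := subset_trans (subsetDl _ _) sWS.
have WL : W :\: L = [set u; v].
  by rewrite setDDr setDv set0U; apply/setIidPr/subsetP => x /set2P [] ->.
apply: pair_connect_edge uv _.
by have := connected_in_setD sWV sLS connW; rewrite WL; apply; rewrite !inE eqxx ?orbT.
Qed.

End Shortcuts.

Section Evaporation.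
Variable T : finType.
Variable e : rel T.
Hypothesis esym : symmetric e.
Variable X : {set T}.

Lemma evap_aux_stalled n (V : {set T}) :
  simplicials e V :\: X = set0 -> all (pred1 set0) (evap_aux e X n V).
Proof.
move=> stalled; elim: n => [|n IH] //=.
by case: ifP => // _; rewrite stalled setD0 /= eqxx.
Qed.

Lemma evap_aux_nil n (V : {set T}) :
  evap_aux e X n V = [::] -> n = 0 \/ V \subset X.
Proof.
case: n => [|n] /=; first by left.
by case: ifP => // VX _; right.
Qed.

(* Each nonempty layer consists of
   simplicial vertices, so removing it keeps G[V \ X] connected; the last
   layer is all of the remaining V \ X, a connected set of simplicial
   vertices. *)
Lemma last_evap_clique n (V : {set T}) :
  #|V :\: X| <= n -> connected_in e (V :\: X) ->
  is_clique e (last set0 (evap_aux e X n V)).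
Proof.
elim: n V => [|n IH] V sizeVX connVX; first exact: clique0.
have [stalled | L_nonempty] := eqVneq (simplicials e V :\: X) set0.
  have := mem_last set0 (evap_aux e X n.+1 V); rewrite inE.
  case/orP=> [/eqP -> | /(allP (evap_aux_stalled n.+1 stalled)) /eqP ->];
  exact: clique0.
rewrite /=; case: ifP => _; first exact: clique0.
set L := simplicials e V :\: X.
have sLVX : L \subset V :\: X := setSD X (simplicials_sub e V).
have sLS : L \subset simplicials e V := subsetDl _ _.
have VLX : (V :\: L) :\: X = (V :\: X) :\: L by rewrite !setDDl setUC.
have sizeL : #|(V :\: L) :\: X| <= n.
  rewrite VLX cardsD (setIidPr sLVX).
  have : 0 < #|L| by rewrite card_gt0.
  have : #|L| <= #|V :\: X| by exact: subset_leq_card.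
  lia.
have connL : connected_in e ((V :\: L) :\: X).
  by rewrite VLX; apply: (connected_in_setD esym (subsetDl V X)) sLS connVX.
have := IH _ sizeL connL.
case rest: (evap_aux e X n (V :\: L)) => [|L' s] //= _.
have VLX0 : (V :\: L) :\: X = set0.
  case: (evap_aux_nil rest) => [n0 | sVLX]; last by apply/eqP; rewrite setD_eq0.
  by apply/eqP; rewrite -cards_eq0 -leqn0 -n0.
have LE : L = V :\: X.
  by apply/eqP; rewrite eqEsubset sLVX -setD_eq0 -VLX VLX0 eqxx.
have sLV : L \subset V := subset_trans sLS (simplicials_sub e V).
by apply: (simplicial_connected_clique esym sLV sLS); rewrite LE.
Qed.

End Evaporation.

Theorem mainTheorem5 (T : finType) (e : rel T) (X : {set T}) :
  symmetric e -> irreflexive e ->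
  chordal e [set: T] ->
  is_clique e X ->
  connected_in e (~: X) ->
  is_clique e (last set0 (evaporation_sequence e [set: T] X)).
Proof.
move=> esym _ _ _ connX.
apply: (last_evap_clique esym); first exact/subset_leq_card/subsetDl.
by rewrite setTD.
Qed.
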